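(* Let $J$ be an instance of TAP and let $s_1,s_2,\dots,s_m$ be an enumeration of all schools (a master list of schools) such that, for every applicant $a$, the preference list of $a$ is the restriction of the order $s_1,\dots,s_m$ to $S(a)$. Then $J$ admits exactly one stable matching, namely the matching $\mathcal M$ produced by the following procedure (Dual Serial Dictatorship): start with $\mathcal M=\emptyset$; for $j=1,2,\dots,m$ in turn, go through the preference list $a_{i_1},\dots,a_{i_\ell}$ of $s_j$ in order and, for $r=1,\dots,\ell$, if $a_{i_r}$ is currently unassigned in $\mathcal M$ and $|\mathcal M_p(s_j)|<c_p(s_j)$ for both subjects $p\in\mathbf p(a_{i_r})$, add $(a_{i_r},s_j)$ to $\mathcal M$.
   Context: An instance of the Teachers Assignment Problem (TAP) consists of a finite set $A$ of applicants, a finite set $S$ of schools and a finite set $P$ of subjects. Each applicant $a\in A$ has a type $\mathbf p(a)=\{p_1(a),p_2(a)\}\subseteq P$ consisting of two distinct subjects, a set $S(a)\subseteq S$ of acceptable schools, and a strict linear order (her preference list) on $S(a)$. Each school $s$ has a partial capacity $c_p(s)\in\mathbb N$ for each subject $p\in P$, and a strict linear order (its preference list) on the set of applicants $a$ with $s\in S(a)$. An assignment $\mathcal M$ is a set of pairs $(a,s)$ with $s\in S(a)$ such that each applicant lies in at most one pair; write $\mathcal M(a)=s$ if $(a,s)\in\mathcal M$ and $\mathcal M(a)=\emptyset$ if $a$ is in no pair (unassigned). For a school $s$ and subjects $p,r$ let $\mathcal M_p(s)=\{a:(a,s)\in\mathcal M,\ p\in\mathbf p(a)\}$ and $\mathcal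 M_{p,r}(s)=\{a:(a,s)\in\mathcal M,\ \mathbf p(a)=\{p,r\}\}$. An assignment is a matching if $|\mathcal M_p(s)|\le c_p(s)$ for all $s\in S$, $p\in P$. School $s$ is undersubscribed in $p$ if $|\mathcal M_p(s)|<c_p(s)$. A pair $(a,s)$ with $s\in S(a)$ and $\mathbf p(a)=\{p_1,p_2\}$ blocks a matching $\mathcal M$ if ($a$ is unassigned or $a$ prefers $s$ to $\mathcal M(a)$) and at least one of: (i) $s$ is undersubscribed in both $p_1$ and $p_2$; (ii) for some $i\in\{1,2\}$, $s$ is undersubscribed in $p_i$ and $s$ prefers $a$ to some applicant in $\mathcal M_{p_{3-i}}(s)$; (iii) $s$ prefers $a$ to some applicant in $\mathcal M_{p_1,p_2}(s)$; (iv) $s$ prefers $a$ to two distinct applicants $a_1\in\mathcal M_{p_1}(s)$ and $a_2\in\mathcal M_{p_2}(s)$. A matching is stable if no pair blocks it. *)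

From HB Require Import structures.
From mathcomp Require Import all_boot.
Set Implicit Arguments. Unset Strict Implicit. Unset Printing Implicit Defensive.

(* An instance of the Teachers Assignment Problem over finite sets of
   applicants A, schools S and subjects P.  Preference lists are given as
   sequences (most preferred first); acceptability is membership. *)
Record TAP (A S P : finType) := MkTAP {
  p1 : A -> P;                 (* first subject of the type of a *)
  p2 : A -> P;
  alist : A -> seq S;
  slist : S -> seq A;
  cap : S -> P -> nat
}.

Section TAPDefs.
Variables (A S P : finType) (J : TAP A S P).

Definition TAP_wf : Prop :=
  [/\ forall a, p1 J a != p2 J a,
      forall a, uniq (alist J a),
      forall s, uniq (slist J s) &
      forall a s, (a \in slist J s) = (s \in alist J a)].

Definition acceptable (a : A) (s : S) : bool := s \in alist J a.

Definition has_subject (a : A) (p : P) : bool := (p1 J a == p) || (p2 J a == p).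

Definition has_type (a : A) (p r : P) : bool :=
  ((p1 J a == p) && (p2 J a == r)) || ((p1 J a == r) && (p2 J a == p)).

Definition assignment := {ffun A -> option S}.

Definition is_assignment (M : assignment) : Prop :=
  forall a s, M a = Some s -> acceptable a s.

Definition Msub (M : assignment) (s : S) (p : P) : {set A} :=
  [set a | (M a == Some s) && has_subject a p].

Definition Mtype (M : assignment) (s : S) (p r : P) : {set A} :=
  [set a | (M a == Some s) && has_type a p r].

Definition is_matching (M : assignment) : Prop :=
  is_assignment M /\ forall s p, #|Msub M s p| <= cap J s p.

Definition undersub (M : assignment) (s : S) (p : P) : bool :=
  #|Msub M s p| < cap J s p.

Definition sprefers (s : S) (a b : A) : bool :=
  index a (slist J s) < index b (slist J s).

Definition aprefers (a : A) (s t : S) : bool :=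
  index s (alist J a) < index t (alist J a).

Definition wants (M : assignment) (a : A) (s : S) : bool :=
  if M a is Some t then aprefers a s t else true.

Definition blocks (M : assignment) (a : A) (s : S) : Prop :=
  acceptable a s /\ wants M a s /\
  [\/ undersub M s (p1 J a) && undersub M s (p2 J a),
      (undersub M s (p1 J a) /\ exists2 b, b \in Msub M s (p2 J a) & sprefers s a b)
      \/ (undersub M s (p2 J a) /\ exists2 b, b \in Msub M s (p1 J a) & sprefers s a b),
      (exists2 b, b \in Mtype M s (p1 J a) (p2 J a) & sprefers s a b) |
      exists b1 b2, [/\ b1 \in Msub M s (p1 J a), b2 \in Msub M s (p2 J a),
                        b1 != b2, sprefers s a b1 & sprefers s a b2]].

Definition stable (M : assignment) : Prop :=
  is_matching M /\ forall a s, ~ blocks M a s.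

Definition dsd_step (s : S) (M : assignment) (a : A) : assignment :=
  if (M a == None) && undersub M s (p1 J a) && undersub M s (p2 J a)
  then [ffun x => if x == a then Some s else M x]
  else M.

Definition dsd_school (M : assignment) (s : S) : assignment :=
  foldl (dsd_step s) M (slist J s).

Definition dsd (ms : seq S) : assignment :=
  foldl dsd_school [ffun => None] ms.

Definition master_list (ms : seq S) : Prop :=
  [/\ uniq ms, forall s, s \in ms &
      forall a, alist J a = [seq s <- ms | s \in alist J a]].

End TAPDefs.

From mathcomp Require Import all_boot.
Set Implicit Arguments. Unset Strict Implicit. Unset Printing Implicit Defensive.

(* DSD examines the pairs (s, a) with s in master-list order and, for each s, a in
   the preference order of s.  Compare any matching N with the partial run by
   restricting N to the pairs already examined.  Since applicants rank schools along
   the master list, a is still free in the restriction iff she prefers s to N(a); and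
   s has room in subject q iff it has room in N or N gives it, in q, a teacher that
   s ranks below a, these being exactly the teachers of s not yet examined.  So, when
   N(a) <> s, DSD admits a to s exactly when (a, s) blocks N.  Hence DSD creates no
   blocking pair, and by induction along the pairs it reproduces every stable
   matching. *)

Lemma index_pivot_lt (T : eqType) (u v : seq T) x y :
  uniq (u ++ x :: v) -> (index y (u ++ x :: v) < index x (u ++ x :: v)) = (y \in u).
Proof.
rewrite cat_uniq /= => /and3P[_ /norP[xNu _] _].
rewrite !index_cat (negPf xNu) /= eqxx addn0.
by case: ifP => [yu|_]; rewrite ?index_mem // ltnNge leq_addr.
Qed.

Lemma uniq_pivot_prefix (T : eqType) (u v u' v' : seq T) x :
  uniq (u ++ x :: v) -> u ++ x :: v = u' ++ x :: v' -> u = u'.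
Proof.
have index_pivot w w' : uniq (w ++ x :: w') -> index x (w ++ x :: w') = size w.
  by rewrite cat_uniq index_cat /= => /and3P[_ /norP[/negPf-> _] _]; rewrite eqxx addn0.
move=> U E; have U' := U; rewrite E in U'.
have sz : size u = size u' by rewrite -(index_pivot u v) // E index_pivot.
by rewrite -(take_size_cat (x :: v) (erefl (size u))) E sz take_size_cat.
Qed.

Lemma index_ltNgt (T : eqType) (l : seq T) x y : x \in l -> y \in l -> x != y ->
  (index x l < index y l) = ~~ (index y l < index x l).
Proof.
move=> xl yl xy; rewrite -leqNgt ltn_neqAle.
by case: eqP => // /(index_inj x xl yl) eqxy; rewrite eqxy eqxx in xy.
Qed.

Section DualSerialDictatorship.
Variables (A S P : finType) (J : TAP A S P).

Lemma mem_Mtype (M : assignment A S) s p r b :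
  p != r -> (b \in Mtype J M s p r) = (b \in Msub J M s p) && (b \in Msub J M s r).
Proof.
move=> pr; rewrite !inE; case: (M b == Some s) => //=.
rewrite /has_type /has_subject.
apply/idP/andP => [/orP[]/andP[]/eqP-> /eqP->|[]]; rewrite ?eqxx ?orbT //.
by move=> /orP[]/eqP e1 /orP[]/eqP e2; rewrite -e1 -e2 ?eqxx ?orbT // in pr *.
Qed.

Definition accommodates (M : assignment A S) (s : S) (q : P) (a : A) : bool :=
  undersub J M s q || [exists b in Msub J M s q, sprefers J s a b].

Lemma blocksP M a s : p1 J a != p2 J a ->
  blocks J M a s <->
  [/\ acceptable J a s, wants J M a s,
      accommodates M s (p1 J a) a & accommodates M s (p2 J a) a].
Proof.
move=> p12; have worse q b : b \in Msub J M s q -> sprefers J s a b ->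
    [exists b in Msub J M s q, sprefers J s a b].
  by move=> bM ab; apply/existsP; exists b; rewrite bM.
split.
  case=> acc [w blk]; suff /andP[h1 h2] :
      accommodates M s (p1 J a) a && accommodates M s (p2 J a) a by [].
  rewrite /accommodates; case: blk => [/andP[-> ->] //|[[-> [b bM ab]]|[-> [b bM ab]]]|[b bT ab]|].
  - by rewrite (worse _ b bM ab) orbT.
  - by rewrite (worse _ b bM ab) orbT.
  - move: bT; rewrite mem_Mtype // => /andP[b1M b2M].
    by rewrite (worse _ b b1M ab) (worse _ b b2M ab) !orbT.
  - case=> b1 [b2 [b1M b2M _ ab1 ab2]].
    by rewrite (worse _ b1 b1M ab1) (worse _ b2 b2M ab2) !orbT.
case=> acc w; rewrite /accommodates.
move=> /orP[u1|/existsP[b1 /andP[b1M ab1]]] /orP[u2|/existsP[b2 /andP[b2M ab2]]];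
  do 2 split => //.
- by apply: Or41; rewrite u1 u2.
- by apply: Or42; left; split => //; exists b2.
- by apply: Or42; right; split => //; exists b1.
case: (eqVneq b1 b2) => [eqb|nb]; last by apply: Or44; exists b1, b2.
by apply: Or43; exists b1; rewrite // mem_Mtype // b1M eqb b2M.
Qed.

Definition restr_pairs (N : assignment A S) (L : seq (S * A)) : assignment A S :=
  [ffun x => if N x is Some t then if (t, x) \in L then Some t else None else None].

Lemma Msub_restr N L s p :
  Msub J (restr_pairs N L) s p = [set b in Msub J N s p | (s, b) \in L].
Proof.
apply/setP=> b; rewrite !inE ffunE; case: (N b) => [t|] //=.
case: (eqVneq t s) => [->|ts]; first by case: ifP => /=; rewrite ?eqxx ?andbT ?andbF.
have tNs : (Some t == Some s) = false by apply/eqP => -[/eqP]; rewrite (negPf ts).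
by case: ifP => /=; rewrite tNs.
Qed.

Lemma restr_pairs_id (N : assignment A S) L :
  (forall x t, N x = Some t -> (t, x) \in L) -> restr_pairs N L = N.
Proof. by move=> NL; apply/ffunP=> x; rewrite ffunE; case Nx: (N x) => [t|] //; rewrite NL. Qed.

Definition admits (M : assignment A S) (s : S) (a : A) : bool :=
  (M a == None) && undersub J M s (p1 J a) && undersub J M s (p2 J a).

Lemma dsd_stepE M s a x :
  dsd_step J s M a x = if (x == a) && admits M s a then Some s else M x.
Proof. by rewrite /dsd_step -/(admits M s a); case: admits; rewrite ?ffunE ?andbT ?andbF. Qed.

Lemma admits_restr_self N L s a : is_matching J N -> N a = Some s -> (s, a) \notin L ->
  admits (restr_pairs N L) s a.
Proof.
move=> [_ Ncap] Nas saL.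
have room q : has_subject J a q -> undersub J (restr_pairs N L) s q.
  move=> aq; rewrite /undersub Msub_restr; apply: leq_trans (Ncap s q).
  apply: proper_card; apply/properP; split.
    by apply/subsetP=> b; rewrite inE => /andP[].
  by exists a; rewrite !inE ?Nas ?eqxx ?aq // (negPf saL) andbF.
by rewrite /admits ffunE Nas (negPf saL) !room // /has_subject eqxx ?orbT.
Qed.

Lemma dsd_step_restr N L s a : admits (restr_pairs N L) s a = (N a == Some s) ->
  dsd_step J s (restr_pairs N L) a = restr_pairs N (rcons L (s, a)).
Proof.
move=> adm; apply/ffunP=> x; rewrite dsd_stepE adm !ffunE.
case: (eqVneq x a) => [->|xa] /=.
  case: eqP => [->|]; first by rewrite mem_rcons mem_head.
  case: (N a) => [t|] // tNs; rewrite mem_rcons inE xpair_eqE eqxx andbT.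
  by case: eqP => [ts|]; first by case: tNs; rewrite ts.
by case: (N x) => [t|] //; rewrite mem_rcons inE xpair_eqE (negPf xa) andbF.
Qed.

Lemma dsd_step_matching M s a : is_matching J M -> acceptable J a s ->
  is_matching J (dsd_step J s M a).
Proof.
move=> [Macc Mcap] acc; rewrite /dsd_step.
case: ifP => [/andP[/andP[/eqP Ma u1] u2]|_]; last by split.
split=> [x t|t q]; rewrite ?ffunE; first by case: eqP => [-> [<-]|_ /Macc].
set M' := [ffun x => _].
have [/andP[/eqP-> aq]|other] := boolP ((t == s) && has_subject J a q).
  have sub : Msub J M' s q \subset a |: Msub J M s q.
    by apply/subsetP => b; rewrite !inE ffunE; case: (eqVneq b a) => [->|_] /=; rewrite ?eqxx.
  apply: leq_trans (subset_leq_card sub) _; rewrite cardsU1 !inE Ma /= add1n.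
  by case/orP: aq => /eqP <-.
suff -> : Msub J M' t q = Msub J M t q by [].
apply/setP=> b; rewrite !inE ffunE; case: (eqVneq b a) => [->|//]; rewrite Ma /=.
by apply: contraNF other => /andP[/eqP[->] ->]; rewrite eqxx.
Qed.

Definition dsd_pair_step (M : assignment A S) (p : S * A) : assignment A S :=
  dsd_step J p.1 M p.2.

Definition dsd_run (L : seq (S * A)) : assignment A S :=
  foldl dsd_pair_step [ffun => None] L.

Definition dsd_pairs (ms : seq S) : seq (S * A) := [seq (s, a) | s <- ms, a <- slist J s].

Lemma dsdE ms : dsd J ms = dsd_run (dsd_pairs ms).
Proof.
rewrite /dsd /dsd_run; elim: ms [ffun => None] => //= s ms IH M.
rewrite foldl_cat -IH; congr foldl.
by rewrite /dsd_school; elim: (slist J s) M => //= a l IHl M; rewrite IHl.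
Qed.

Lemma mem_dsd_pairs ms s a : ((s, a) \in dsd_pairs ms) = (s \in ms) && (a \in slist J s).
Proof.
apply/allpairsPdep/andP => [[t [x [? ? [-> ->]]]] //|[? ?]].
by exists s, a.
Qed.

Lemma foldl_dsd_keep L (M : assignment A S) x t :
  M x = Some t -> foldl dsd_pair_step M L x = Some t.
Proof.
elim: L M => //= p L IH M Mx; apply: IH.
by rewrite /dsd_pair_step dsd_stepE; case: eqP => [xp|//]; rewrite /admits -xp Mx.
Qed.

Lemma foldl_dsd_origin L (M : assignment A S) x t :
  foldl dsd_pair_step M L x = Some t -> M x = Some t \/ (t, x) \in L.
Proof.
elim: L M => [|[s a] L IH] M /=; first by left.
case/IH => [|tL]; last by right; rewrite inE tL orbT.
rewrite /dsd_pair_step dsd_stepE; case: ifP => [/andP[/eqP-> _] [<-]|_]; last by left.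
by right; rewrite mem_head.
Qed.

Lemma dsd_run_prefix L R : uniq (L ++ R) -> dsd_run L = restr_pairs (dsd_run (L ++ R)) L.
Proof.
rewrite cat_uniq => /and3P[_ LR _]; apply/ffunP=> x; rewrite ffunE /dsd_run foldl_cat.
set E := foldl dsd_pair_step [ffun => None] L.
case Lx: (E x) => [t|].
  have [|tL] := foldl_dsd_origin Lx; first by rewrite ffunE.
  by rewrite (foldl_dsd_keep _ Lx) tL.
case Rx: (foldl dsd_pair_step E R x) => [t|] //; case: ifP => // tL.
have [|tR] := foldl_dsd_origin Rx; first by rewrite Lx.
by move/hasPn: LR => /(_ _ tR); rewrite tL.
Qed.

Lemma dsd_run_matching L : (forall s a, (s, a) \in L -> acceptable J a s) ->
  is_matching J (dsd_run L).
Proof.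
rewrite /dsd_run; have : is_matching J [ffun => None].
  split=> [x t|s p]; rewrite ?ffunE // (_ : Msub J _ s p = set0) ?cards0 //.
  by apply/setP=> x; rewrite !inE ffunE.
elim: L [ffun => None] => //= [[s a] L IH] M MM acc.
apply: IH => [|t x xL]; first by apply: dsd_step_matching; rewrite ?acc ?mem_head.
by rewrite acc // inE xL orbT.
Qed.

Section MasterList.
Variable ms : seq S.
Hypotheses (two_subjects : forall a, p1 J a != p2 J a)
           (slist_uniq : forall s, uniq (slist J s))
           (mem_slist : forall a s, (a \in slist J s) = (s \in alist J a))
           (ms_uniq : uniq ms) (mem_ms : forall s, s \in ms)
           (alist_ms : forall a, alist J a = [seq s <- ms | s \in alist J a]).

Lemma dsd_pairs_uniq : uniq (dsd_pairs ms).
Proof. by apply: allpairs_uniq_dep => // [[? ?] [? ?] _ _ [-> ->]]. Qed.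

Lemma pivot_mem_slist L s a R : dsd_pairs ms = L ++ (s, a) :: R -> a \in slist J s.
Proof.
move=> Ps; have : (s, a) \in dsd_pairs ms by rewrite Ps mem_cat mem_head orbT.
by rewrite mem_dsd_pairs => /andP[].
Qed.

Lemma dsd_pairs_prefix L s a R : dsd_pairs ms = L ++ (s, a) :: R ->
  exists pre post u v, [/\ ms = pre ++ s :: post, slist J s = u ++ a :: v &
    L = dsd_pairs pre ++ [seq (s, x) | x <- u]].
Proof.
move=> Ps; have aS := pivot_mem_slist Ps.
have [pre [post Hms]] : exists pre post, ms = pre ++ s :: post.
  by case: (splitPr (mem_ms s)) => pre post; exists pre, post.
have [u [v Hsl]] : exists u v, slist J s = u ++ a :: v.
  by case: (splitPr aS) => u v; exists u, v.
exists pre, post, u, v; split => //.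
apply: (@uniq_pivot_prefix _ _ R _ ([seq (s, x) | x <- v] ++ dsd_pairs post) (s, a)).
  by rewrite -Ps dsd_pairs_uniq.
by rewrite -Ps /dsd_pairs Hms allpairs_cat allpairs_cons Hsl map_cat -!catA.
Qed.

Lemma prefix_applicant L s a R t : dsd_pairs ms = L ++ (s, a) :: R ->
  t \in alist J a -> ((t, a) \in L) = aprefers J a t s.
Proof.
move=> Ps ta; have [pre [post [u [v [Hms Hsl ->]]]]] := dsd_pairs_prefix Ps.
have sa : s \in alist J a by rewrite -mem_slist (pivot_mem_slist Ps).
have U := filter_uniq (fun x => x \in alist J a) ms_uniq.
rewrite Hms filter_cat /= sa in U.
rewrite /aprefers alist_ms Hms filter_cat /= sa index_pivot_lt //.
rewrite mem_filter ta mem_cat mem_dsd_pairs mem_slist ta andbT.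
have aNu : a \notin u by move: (slist_uniq s); rewrite Hsl cat_uniq /= => /and3P[_ /norP[]].
suff -> : ((t, a) \in [seq (s, x) | x <- u]) = false by rewrite orbF.
by apply/mapP => -[x xu [_ ax]]; rewrite ax xu in aNu.
Qed.

Lemma prefix_school L s a R b : dsd_pairs ms = L ++ (s, a) :: R ->
  b \in slist J s -> ((s, b) \in L) = sprefers J s b a.
Proof.
move=> Ps bs; have [pre [post [u [v [Hms Hsl ->]]]]] := dsd_pairs_prefix Ps.
have sNpre : s \notin pre by move: ms_uniq; rewrite Hms cat_uniq /= => /and3P[_ /norP[]].
rewrite /sprefers Hsl index_pivot_lt -?Hsl // mem_cat mem_dsd_pairs (negPf sNpre) /=.
by rewrite mem_map // => x y [].
Qed.

Lemma restr_prefix_unassigned N L s a R : is_assignment J N -> N a != Some s ->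
  dsd_pairs ms = L ++ (s, a) :: R -> (restr_pairs N L a == None) = wants J N a s.
Proof.
move=> Nacc Nas Ps; rewrite /wants ffunE.
case Na: (N a) => [t|] //; have ta : t \in alist J a by apply: Nacc.
have sa : s \in alist J a by rewrite -mem_slist (pivot_mem_slist Ps).
have ts : t != s by apply: contraNneq Nas => ts; rewrite Na ts.
rewrite (prefix_applicant Ps ta) /aprefers (index_ltNgt ta sa ts).
by case: (index s _ < _).
Qed.

Lemma undersub_restr_prefix N L s a R q : is_matching J N -> N a != Some s ->
  dsd_pairs ms = L ++ (s, a) :: R ->
  undersub J (restr_pairs N L) s q = accommodates N s q a.
Proof.
move=> [Nacc Ncap] Nas Ps.
have restrE :
    Msub J (restr_pairs N L) s q = [set b in Msub J N s q | ~~ sprefers J s a b].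
  apply/setP=> b; rewrite Msub_restr !inE.
  case Nb: (N b == Some s) => //=; move/eqP: Nb => Nb.
  have bs : b \in slist J s by rewrite mem_slist; apply: Nacc.
  have ba : b != a by apply: contraNneq Nas => ba; rewrite -ba Nb.
  by rewrite (prefix_school Ps bs) /sprefers (index_ltNgt bs (pivot_mem_slist Ps) ba).
have sub : [set b in Msub J N s q | ~~ sprefers J s a b] \subset Msub J N s q.
  by apply/subsetP => b; rewrite inE => /andP[].
rewrite /accommodates /undersub restrE; apply/idP/orP => [lt|].
  case: (ltnP #|Msub J N s q| (cap J s q)) => [|capN]; [by left | right].
  have /subsetPn[b bN] : ~~ (Msub J N s q \subset [set b in Msub J N s q | ~~ sprefers J s a b]).
    by apply: contraTN lt => /subset_leq_card le; rewrite -leqNgt (leq_trans capN le).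
  by rewrite inE bN negbK => ab; apply/existsP; exists b; rewrite bN.
case=> [lt|/existsP[b /andP[bN ab]]]; first exact: leq_ltn_trans (subset_leq_card sub) lt.
apply: leq_trans (Ncap s q); apply: proper_card; apply/properP; split=> //.
by exists b; rewrite // inE ab andbF.
Qed.

Lemma admits_restr_prefix N L s a R : is_matching J N -> N a != Some s ->
  dsd_pairs ms = L ++ (s, a) :: R -> admits (restr_pairs N L) s a <-> blocks J N a s.
Proof.
move=> NM Nas Ps.
rewrite /admits (restr_prefix_unassigned NM.1 Nas Ps) !(undersub_restr_prefix _ NM Nas Ps).
have acc : acceptable J a s by rewrite /acceptable -mem_slist (pivot_mem_slist Ps).
split=> [/andP[/andP[w u1] u2]|/(blocksP _ _ (two_subjects a))[_ -> -> ->] //].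
by apply/(blocksP _ _ (two_subjects a)).
Qed.

Lemma dsd_stable : stable J (dsd J ms).
Proof.
rewrite dsdE; set D := dsd_run _.
have DM : is_matching J D.
  by apply: dsd_run_matching => s a; rewrite mem_dsd_pairs /acceptable -mem_slist => /andP[].
split=> // a s blk.
have [L [R Ps]] : exists L R, dsd_pairs ms = L ++ (s, a) :: R.
  have sa : (s, a) \in dsd_pairs ms by rewrite mem_dsd_pairs mem_ms mem_slist; case: blk.
  by case: (splitPr sa) => L R; exists L, R.
have Das : D a != Some s.
  by apply/eqP => Das; case: blk => _ []; rewrite /wants Das /aprefers ltnn.
have DL : dsd_run L = restr_pairs D L.
  by rewrite /D Ps (dsd_run_prefix (R := (s, a) :: R)) // -Ps dsd_pairs_uniq.
have adm : admits (dsd_run L) s a by rewrite DL; apply/(admits_restr_prefix DM Das Ps).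
move/eqP: Das; apply; rewrite /D Ps /dsd_run foldl_cat /=; apply: foldl_dsd_keep.
by rewrite /dsd_pair_step dsd_stepE eqxx -/(dsd_run L) adm.
Qed.

Lemma stable_dsd_run_prefix M L R : stable J M -> dsd_pairs ms = L ++ R ->
  dsd_run L = restr_pairs M L.
Proof.
move=> [MM Mnb]; elim/last_ind: L R => [|L [s a] IH] R Ps.
  by apply/ffunP=> x; rewrite !ffunE; case: (M x).
have Ps' : dsd_pairs ms = L ++ (s, a) :: R by rewrite Ps cat_rcons.
rewrite /dsd_run foldl_rcons -/(dsd_run L) (IH _ Ps'); apply: dsd_step_restr.
have [Mas|Mas] := eqVneq (M a) (Some s).
  apply: admits_restr_self => //; move: dsd_pairs_uniq; rewrite Ps' cat_uniq.
  by case/and3P=> _ /hasPn/(_ _ (mem_head _ _)).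
by apply/negbTE/negP => /(admits_restr_prefix MM Mas Ps'); apply: Mnb.
Qed.

Lemma stable_eq_dsd M : stable J M -> M = dsd J ms.
Proof.
move=> stM; rewrite dsdE (stable_dsd_run_prefix stM (R := [::])) ?cats0 //.
apply/esym/restr_pairs_id => x t Mxt; rewrite mem_dsd_pairs mem_ms mem_slist.
by case: stM => -[Macc _] _; apply: Macc.
Qed.

End MasterList.
End DualSerialDictatorship.

Theorem theorem3 (A S P : finType) (J : TAP A S P) (ms : seq S) :
  TAP_wf J -> master_list J ms ->
  stable J (dsd J ms) /\ (forall M, stable J M -> M = dsd J ms).
Proof.
case=> two_subjects _ slist_uniq mem_slist [ms_uniq mem_ms alist_ms].
by split=> [|M]; [apply: dsd_stable | apply: stable_eq_dsd].
Qed.
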